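(* Let $\mathrm{k}$ be an infinite field. For $n\in\{2,3\}$ and $P\in\mathrm{k}[T]$ with $\deg P\geq2$, the $\mathrm{k}$-algebra $\mathrm{k}[T]/(P^n)$ has infinitely many subalgebras.
   Context: Subalgebras are unital (contain $1$). *)

From HB Require Import structures.
From mathcomp Require Import all_boot all_order all_algebra.
Set Implicit Arguments.
Unset Strict Implicit.
Unset Printing Implicit Defensive.
Import GRing.Theory.
Local Open Scope ring_scope.

Definition infinite_field (F : fieldType) : Prop :=
  forall s : seq F, exists x : F, x \notin s.

Definition monic_gen (F : fieldType) (q : {poly F}) : {poly F} :=
  (lead_coef q)^-1 *: q.

(* The F-algebra F[T]/(q), realized via mathcomp's qpoly on the monic
   generator of (q) (qpoly requires a monic modulus). *)
Definition quot_alg (F : fieldType) (q : {poly F}) := {poly %/ monic_gen q}.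

Definition is_subalgebra (F : fieldType) (q : {poly F})
  (U : {vspace quot_alg q}) : Prop :=
  (1 \in U) /\ (forall x y : quot_alg q, x \in U -> y \in U -> x * y \in U).

Definition infinitely_many_subalgebras (F : fieldType) (q : {poly F}) : Prop :=
  forall s : seq {vspace quot_alg q},
    exists U : {vspace quot_alg q}, is_subalgebra U /\ U \notin s.

From mathcomp Require Import all_boot all_order all_algebra.
From mathcomp Require Import zify.

Set Implicit Arguments.
Unset Strict Implicit.
Unset Printing Implicit Defensive.

Import GRing.Theory.
Local Open Scope ring_scope.

(* If [Q] divides [R^2] and [deg R + 1 < deg Q], then for every constant [c]
   the class [v_c] of [R (X + c)] in [k[T]/(Q)] is a nonzero element of square
   zero, so [k + k v_c] is a subalgebra; these subalgebras are pairwise distinct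
   because [R (X + c)] is never an affine combination of [1] and [R (X + c')]
   for [c <> c'].  For [Q = P^n] take [R = P^(ceil(n/2))]. *)

Lemma infinite_field_uniq_seq (F : fieldType) (m : nat) :
  infinite_field F -> exists s : seq F, uniq s /\ size s = m.
Proof.
move=> infF; elim: m => [|m [s [uniq_s size_s]]]; first by exists [::].
have [x x_notin_s] := infF s.
by exists (x :: s); rewrite /= x_notin_s uniq_s size_s.
Qed.

Lemma infinite_field_inj_notin (F : fieldType) (T : eqType) (f : F -> T) :
  infinite_field F -> injective f -> forall s : seq T, exists x, f x \notin s.
Proof.
move=> infF inj_f s.
have [cs [uniq_cs size_cs]] := infinite_field_uniq_seq (size s).+1 infF.
suff /allPn[c _ fc_notin_s] : ~~ all (fun c => f c \in s) cs by exists c.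
apply/negP => /allP fcs_in_s.
have : (size (map f cs) <= size s)%N.
  apply: uniq_leq_size; first by rewrite map_inj_uniq.
  by move=> _ /mapP[c c_in_cs ->]; exact: fcs_in_s.
by rewrite size_map size_cs ltnn.
Qed.

Lemma square_zero_subalgebra (F : fieldType) (q : {poly F}) (v : quot_alg q) :
  v * v = 0 -> is_subalgebra (<[1 : quot_alg q]> + <[v]>)%VS.
Proof.
move=> vv; set U := (_ + _)%VS.
have U1 : 1 \in U by rewrite -[X in X \in _]addr0 memv_add ?memv_line ?mem0v.
have Uv : v \in U by rewrite -[X in X \in _]add0r memv_add ?memv_line ?mem0v.
split=> // x y /memv_addP[x1 /vlineP[a ->] [x2 /vlineP[b ->] ->]].
move=> /memv_addP[y1 /vlineP[a' ->] [y2 /vlineP[b' ->] ->]].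
rewrite !(mulrDl, mulrDr) -!scalerAl -!scalerAr mul1r mulr1 mul1r vv.
by rewrite !scaler0 addr0 !memvD ?memvZ.
Qed.

Lemma mul_XaddC_affine_inj (F : fieldType) (R : {poly F}) (a b c c' : F) :
  (1 < size R)%N -> R * ('X + c%:P) = a%:P + b *: (R * ('X + c'%:P)) -> c = c'.
Proof.
move=> sR E.
have R0 : R != 0 by rewrite -size_poly_gt0 (ltnW sR).
have E' : R * ('X + c%:P - b *: ('X + c'%:P)) = a%:P.
  by rewrite mulrBr -scalerAr E addrK.
have a0 : a = 0.
  apply/eqP; apply: contraTT sR => a0; rewrite -leqNgt.
  have aP0 : a%:P != 0 by rewrite polyC_eq0.
  have dvd_Ra : R %| a%:P by rewrite -E' dvdp_mulIl.
  by rewrite (leq_trans (dvdp_leq aP0 dvd_Ra)) // size_polyC leq_b1.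
move: E'; rewrite a0 => /eqP; rewrite mulf_eq0 (negPf R0) /= subr_eq0 => /eqP E0.
have b1 : b = 1.
  have := congr1 (fun p : {poly F} => p`_1) E0.
  by rewrite /= coefZ !coefD coefX !coefC /= addr0 mulr1.
have := congr1 (fun p : {poly F} => p`_0) E0.
by rewrite /= coefZ !coefD coefX !coefC b1 mul1r !add0r.
Qed.

Section QuotAlg.

Variables (F : fieldType) (Q : {poly F}).
Hypothesis size_Q_gt1 : (1 < size Q)%N.

Let Q0 : Q != 0. Proof. by rewrite -size_poly_gt0 (ltnW size_Q_gt1). Qed.

Lemma monic_gen_monic : monic_gen Q \is monic.
Proof. by rewrite monicE /monic_gen lead_coefZ mulVf ?lead_coef_eq0. Qed.

Lemma size_monic_gen : size (monic_gen Q) = size Q.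
Proof. by rewrite size_scale ?invr_eq0 ?lead_coef_eq0. Qed.

Lemma mk_monic_gen : mk_monic (monic_gen Q) = monic_gen Q.
Proof. by rewrite /mk_monic size_monic_gen size_Q_gt1 monic_gen_monic. Qed.

Lemma in_quot_alg_small (p : {poly F}) :
  (size p < size Q)%N -> in_qpoly (monic_gen Q) p = p :> {poly F}.
Proof. by move=> sp; rewrite in_qpoly_small // mk_monic_gen size_monic_gen. Qed.

Lemma in_quot_alg_eq0 (p : {poly F}) :
  Q %| p -> in_qpoly (monic_gen Q) p = 0.
Proof.
move=> dvd_Qp; apply: val_inj => /=.
rewrite mk_monic_gen -Pdiv.IdomainMonic.modpE ?monic_gen_monic //.
by apply/modp_eq0P; rewrite dvdpZl ?invr_eq0 ?lead_coef_eq0.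
Qed.

End QuotAlg.

Lemma square_dvd_infinitely_many_subalgebras (F : fieldType) (Q R : {poly F}) :
  infinite_field F -> Q %| R * R -> (1 < size R)%N -> ((size R).+1 < size Q)%N ->
  infinitely_many_subalgebras Q.
Proof.
move=> infF dvd_Q_RR sR sRQ s.
have sQ : (1 < size Q)%N by rewrite (leq_trans _ sRQ).
have R0 : R != 0 by rewrite -size_poly_gt0 (ltnW sR).
pose v (c : F) : quot_alg Q := in_qpoly (monic_gen Q) (R * ('X + c%:P)).
have vE c : v c = R * ('X + c%:P) :> {poly F}.
  have XaddC0 : 'X + c%:P != 0 by rewrite -size_poly_gt0 size_XaddC.
  by apply: in_quot_alg_small; rewrite // size_mul // size_XaddC addn2.
have vv c : v c * v c = 0.
  by rewrite -in_qpolyM in_quot_alg_eq0 // mulrACA dvdp_mulr.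
pose U c := (<[1 : quot_alg Q]> + <[v c]>)%VS.
have U_inj : injective U.
  move=> c c' Ucc'.
  have : v c \in U c' by rewrite -Ucc' -[X in X \in _]add0r memv_add ?memv_line ?mem0v.
  move=> /memv_addP[x1 /vlineP[a ->] [x2 /vlineP[b ->]]].
  move=> /(congr1 (fun p : quot_alg Q => p : {poly F})).
  rewrite poly_of_qpolyD !poly_of_qpolyZ !vE /= scale_polyC mulr1.
  exact: mul_XaddC_affine_inj.
have [c Uc_notin_s] := infinite_field_inj_notin infF U_inj s.
by exists (U c); split=> //; exact: square_zero_subalgebra.
Qed.

Lemma infinitely_many_subalgebras_exp (F : fieldType) (P : {poly F}) (n : nat) :
  infinite_field F -> (1 < n)%N -> (2 < size P)%N ->
  infinitely_many_subalgebras (P ^+ n).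
Proof.
move=> infF n_gt1 sP.
have P0 : P != 0 by rewrite -size_poly_gt0 (ltn_trans _ sP).
have size_exp_P m : size (P ^+ m) = ((size P).-1 * m)%N.+1.
  by rewrite -size_exp prednK // size_poly_gt0 expf_neq0.
apply: (@square_dvd_infinitely_many_subalgebras _ _ (P ^+ uphalf n)) => //.
- by rewrite -exprD dvdp_exp2l // addnn uphalfK leq_addl.
- by rewrite size_exp_P uphalf_half; nia.
- by have := odd_double_half n; rewrite !size_exp_P uphalf_half; nia.
Qed.

Theorem lemma3p6 (k : fieldType) (n : nat) (P : {poly k}) :
  infinite_field k ->
  (n == 2)%N || (n == 3)%N ->
  (2 < size P)%N ->
  infinitely_many_subalgebras (P ^+ n).
Proof.
move=> infk /orP[] /eqP -> sP; exact: infinitely_many_subalgebras_exp.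
Qed.
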